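(* Let $C$ be a linear code over $\mathbb{Z}_4+u\mathbb{Z}_4$ of length $n$ and $C^{\perp}$ its dual. Then $$Lee_{C^{\perp}}(W,X)=\frac{1}{|C|}\,Lee_C(W+X,W-X).$$
   Context: $\mathbb{Z}_4+u\mathbb{Z}_4$ is the commutative ring of characteristic $4$ with $u^2=0$; a linear code of length $n$ is a submodule of $(\mathbb{Z}_4+u\mathbb{Z}_4)^n$, and $C^\perp$ is its dual with respect to the Euclidean inner product $\sum_i x_iy_i$ computed in the ring. The Lee weight on $\mathbb{Z}_4$ is $0,1,2,1$ for $0,1,2,3$; the Lee weight on $\mathbb{Z}_4+u\mathbb{Z}_4$ is $w_L(a+ub)=w_L(b)+w_L(a+b)$, extended additively to vectors. The Lee weight enumerator is $Lee_C(W,X)=\sum_{c\in C}W^{4n-w_L(c)}X^{w_L(c)}$. *)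

From HB Require Import structures.
From mathcomp Require Import all_boot all_order all_algebra.
From mathcomp Require Import mpoly.
Set Implicit Arguments. Unset Strict Implicit. Unset Printing Implicit Defensive.
Import GRing.Theory.
Local Open Scope ring_scope.

(* The ring Z4 + u Z4 (u^2 = 0): the pair (a, b) represents a + u b. *)
Definition R4 := ('Z_4 * 'Z_4)%type.

Definition R4add (x y : R4) : R4 := (x.1 + y.1, x.2 + y.2).
Definition R4mul (x y : R4) : R4 := (x.1 * y.1, x.1 * y.2 + x.2 * y.1).
Definition R4zero : R4 := (0, 0).

Definition vec (n : nat) := {ffun 'I_n -> R4}.

Definition vadd n (x y : vec n) : vec n := [ffun i => R4add (x i) (y i)].
Definition vscale n (r : R4) (x : vec n) : vec n := [ffun i => R4mul r (x i)].
Definition vzero n : vec n := [ffun => R4zero].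

Definition is_linear_code n (C : {set vec n}) : Prop :=
  [/\ vzero n \in C,
      (forall x y, x \in C -> y \in C -> vadd x y \in C) &
      (forall r x, x \in C -> vscale r x \in C)].

Definition inner n (x y : vec n) : R4 :=
  foldr R4add R4zero [seq R4mul (x i) (y i) | i <- enum 'I_n].

Definition dual n (C : {set vec n}) : {set vec n} :=
  [set y | [forall x in C, inner x y == R4zero]].

Definition leeZ4 (a : 'Z_4) : nat :=
  if a == 0 then 0%N else if a == 2%:R then 2%N else 1%N.
Definition leeR4 (x : R4) : nat := addn (leeZ4 x.2) (leeZ4 (x.1 + x.2)%R).
Definition leeW n (x : vec n) : nat := (\sum_(i < n) leeR4 (x i))%N.

Definition LeeEnum n (C : {set vec n}) (P Q : {mpoly rat[2]}) : {mpoly rat[2]} :=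
  \sum_(c in C) P ^+ (4 * n - leeW c) * Q ^+ (leeW c).

Definition varW : {mpoly rat[2]} := 'X_(0 : 'I_2).
Definition varX : {mpoly rat[2]} := 'X_(1 : 'I_2).

From mathcomp Require Import all_boot all_algebra all_field.
From mathcomp Require Import mpoly ring zify.
Set Implicit Arguments. Unset Strict Implicit. Unset Printing Implicit Defensive.
Import GRing.Theory Num.Theory.
Local Open Scope ring_scope.

(* The map [a + ub |-> i^(a+b)] is a generating character of Z4 + uZ4, so the
   usual MacWilliams argument applies: summing [i^(trace <x, y>)] over a linear
   code C gives |C| on the dual and 0 elsewhere, and the Lee weight enumerator
   is a product of one-coordinate monomials, whence Poisson summation reduces
   the identity to a single coordinate.  There the Gray map a + ub |-> (b, a+b)
   is a Lee isometry onto Z4^2 that turns the pairing into q q' - p p', so the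
   one-coordinate identity is a product of two copies of the one for Z4.  The
   computation is carried out in algC[W, X], which contains rat[W, X] and i. *)

(* The monomial of degree m only when k <= m (truncated subtraction). *)
Definition wmono (S : comNzRingType) (P Q : S) (m k : nat) : S :=
  P ^+ (m - k) * Q ^+ k.

Lemma wmonoD (S : comNzRingType) (P Q : S) m1 m2 k1 k2 :
  (k1 <= m1)%N -> (k2 <= m2)%N ->
  wmono P Q (m1 + m2) (k1 + k2) = wmono P Q m1 k1 * wmono P Q m2 k2.
Proof.
move=> le_k1 le_k2; rewrite /wmono.
have -> : (m1 + m2 - (k1 + k2) = (m1 - k1) + (m2 - k2))%N by lia.
by rewrite !exprD mulrACA.
Qed.

Lemma wmono_prod (S : comNzRingType) (P Q : S) (I : finType) m (F : I -> nat) :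
  (forall i, F i <= m)%N ->
  \prod_i wmono P Q m (F i) = wmono P Q (m * #|I|) (\sum_i F i).
Proof.
move=> le_Fm; rewrite big_split /= !prodrXr sumnB => [|i _]; last exact: le_Fm.
by rewrite sum_nat_const mulnC.
Qed.

Lemma sum_Z4 (M : nmodType) (F : 'Z_4 -> M) :
  \sum_(t : 'Z_4) F t = F 0 + F 1 + F 2%:R + F 3%:R.
Proof.
rewrite [LHS](big_ord_recl (Zp_trunc 4).+1) !big_ord_recl big_ord0 addr0 !addrA.
by congr (F _ + F _ + F _ + F _); apply/val_inj.
Qed.

Lemma Z4_cases (s : 'Z_4) : [\/ s = 0, s = 1, s = 2%:R | s = 3%:R].
Proof.
case: s => -[|[|[|[|s]]]] lt_s4 //;
  [constructor 1 | constructor 2 | constructor 3 | constructor 4]; exact: val_inj.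
Qed.

Lemma leeZ4_le2 (t : 'Z_4) : (leeZ4 t <= 2)%N.
Proof. by rewrite /leeZ4; case: ifP => //; case: ifP. Qed.

Lemma leeZ4N (t : 'Z_4) : leeZ4 (- t) = leeZ4 t.
Proof. by case: (Z4_cases t) => ->. Qed.

Lemma leeR4_le4 (w : R4) : (leeR4 w <= 4)%N.
Proof. exact: (leq_add (leeZ4_le2 _) (leeZ4_le2 _)). Qed.

Definition pi4 (z : R4) : 'Z_4 := z.1 + z.2.

Lemma pi4D a b : pi4 (a + b) = pi4 a + pi4 b.
Proof. by rewrite /pi4 /=; ring. Qed.

Lemma pi4_sum (I : Type) (r : seq I) (F : I -> R4) :
  pi4 (\sum_(i <- r) F i) = \sum_(i <- r) pi4 (F i).
Proof. by apply: (big_morph pi4 pi4D); rewrite /pi4 addr0. Qed.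

Definition gray (z : R4) : 'Z_4 * 'Z_4 := (z.2, z.1 + z.2).
Definition of_gray (p : 'Z_4 * 'Z_4) : R4 := (p.2 - p.1, p.1).

Lemma of_grayK : cancel of_gray gray.
Proof. by case=> p1 p2; rewrite /gray /= subrK. Qed.

Lemma leeR4_of_gray p : leeR4 (of_gray p) = (leeZ4 p.1 + leeZ4 p.2)%N.
Proof. by rewrite /leeR4 /= subrK. Qed.

Lemma pi4_mul_of_gray z p :
  pi4 (R4mul z (of_gray p)) = - z.2 * p.1 + (z.1 + z.2) * p.2.
Proof. by rewrite /pi4 /=; ring. Qed.

Section Character.
Variables (S : comNzRingType) (j : S).
Hypothesis j2 : j ^+ 2 = -1.

Definition chi (k : 'Z_4) : S := j ^+ val k.

Lemma chiD a b : chi (a + b) = chi a * chi b.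
Proof.
have j4 : j ^+ 4 = 1 by rewrite (exprM j 2 2) j2 sqrrN expr1n.
by rewrite /chi -exprD -[RHS](expr_mod _ j4).
Qed.

Lemma chi0 : chi 0 = 1. Proof. by []. Qed.

Lemma chi2 : chi 2%:R = -1. Proof. by rewrite -j2. Qed.

Lemma chiMn a k : chi (a *+ k) = chi a ^+ k.
Proof. by elim: k => [|k IH]; rewrite ?chi0 // mulrS chiD IH exprS. Qed.

Lemma lee_transform_Z4 (P Q : S) (s : 'Z_4) :
  \sum_(t : 'Z_4) chi (s * t) * wmono P Q 2 (leeZ4 t)
  = wmono (P + Q) (P - Q) 2 (leeZ4 s).
Proof.
rewrite sum_Z4 mulr0 mulr1 (mulr_natr s 2) (mulr_natr s 3) !chiMn chi0 /wmono.
have lee_vals :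
  [/\ leeZ4 0 = 0%N, leeZ4 1 = 1%N, leeZ4 2%:R = 2%N & leeZ4 3%:R = 1%N] by [].
have chi1 : chi 1 = j by [].
have chi3 : chi 3%:R = - j by rewrite -[RHS]mulN1r -j2 -exprSr.
by case: (Z4_cases s) => ->; case: lee_vals => -> -> -> ->;
  rewrite ?chi0 ?chi1 ?chi2 ?chi3; ring: j2.
Qed.

Lemma lee_transform_R4 (P Q : S) (z : R4) :
  \sum_(w : R4) chi (pi4 (R4mul z w)) * wmono P Q 4 (leeR4 w)
  = wmono (P + Q) (P - Q) 4 (leeR4 z).
Proof.
have lee_split (P' Q' : S) t t' : wmono P' Q' 4 (leeZ4 t + leeZ4 t')
    = wmono P' Q' 2 (leeZ4 t) * wmono P' Q' 2 (leeZ4 t').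
  exact: (wmonoD P' Q' (leeZ4_le2 t) (leeZ4_le2 t')).
transitivity (\sum_(p : 'Z_4) \sum_(q : 'Z_4)
    (chi (- z.2 * p) * wmono P Q 2 (leeZ4 p)) *
    (chi ((z.1 + z.2) * q) * wmono P Q 2 (leeZ4 q))).
  rewrite pair_bigA (reindex_inj (can_inj of_grayK)); apply: eq_bigr => -[p q] _.
  by rewrite pi4_mul_of_gray leeR4_of_gray lee_split chiD mulrACA.
under eq_bigr do rewrite -mulr_sumr.
by rewrite -mulr_suml !lee_transform_Z4 leeZ4N -lee_split.
Qed.

End Character.

Lemma foldr_R4add (s : seq R4) : foldr R4add R4zero s = \sum_(z <- s) z.
Proof. by elim: s => [|z s IH]; rewrite ?big_nil ?big_cons //= IH. Qed.

Lemma inner_sum n (x y : vec n) : inner x y = \sum_(i < n) R4mul (x i) (y i).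
Proof. by rewrite /inner foldr_R4add big_map big_enum. Qed.

Definition psi n (x y : vec n) : 'Z_4 := pi4 (inner x y).

Lemma psi_sum n (x y : vec n) :
  psi x y = \sum_(i < n) pi4 (R4mul (x i) (y i)).
Proof. by rewrite /psi inner_sum pi4_sum. Qed.

Lemma psiDl n (x x' y : vec n) : psi (vadd x x') y = psi x y + psi x' y.
Proof.
rewrite !psi_sum -big_split; apply: eq_bigr => i _.
by rewrite ffunE /pi4 /=; ring.
Qed.

Lemma psi_uscale n (x y : vec n) : psi (vscale (0, 1) x) y = (inner x y).1.
Proof.
rewrite psi_sum inner_sum (big_morph fst (fun _ _ => erefl) erefl).
by apply: eq_bigr => i _; rewrite ffunE /pi4 /=; ring.
Qed.

Lemma in_dualP n (C : {set vec n}) y : is_linear_code C ->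
  reflect (forall x, x \in C -> psi x y = 0) (y \in dual C).
Proof.
case=> _ _ scaleC; rewrite inE.
apply: (iffP forall_inP) => [yC x xC | psi0 x xC].
  by rewrite /psi (eqP (yC x xC)) /pi4 addr0.
have inner1 : (inner x y).1 = 0 by rewrite -psi_uscale psi0 ?scaleC.
have inner2 : (inner x y).2 = 0.
  by have := psi0 x xC; rewrite /psi /pi4 inner1 add0r.
by rewrite [inner x y]surjective_pairing inner1 inner2.
Qed.

Lemma vadd_code n (C : {set vec n}) x x0 : is_linear_code C -> x0 \in C ->
  (vadd x x0 \in C) = (x \in C).
Proof.
case=> _ addC scaleC x0C; apply/idP/idP => [xx0C|]; last by move/addC; apply.
have -> : x = vadd (vadd x x0) (vscale (-1, 0) x0).
  apply/ffunP => i; rewrite !ffunE; case: (x i) (x0 i) => a b [c d].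
  by rewrite /R4add /R4mul /=; congr pair; ring.
exact/addC/scaleC.
Qed.

Lemma vadd_inj n (x0 : vec n) : injective (fun x => vadd x x0).
Proof. exact: addIr. Qed.

Lemma exists_psi2 n (C : {set vec n}) y : is_linear_code C -> y \notin dual C ->
  exists2 x, x \in C & psi x y = 2%:R.
Proof.
move=> linC ny; have [x1 x1C] : exists2 x, x \in C & psi x y != 0.
  apply/exists_inP; apply: contraNT ny => /exists_inPn psi0.
  by apply/(in_dualP _ linC) => x /psi0 /negbNE /eqP.
have x1x1C : vadd x1 x1 \in C by case: linC => _ addC _; apply: addC.
case: (Z4_cases (psi x1 y)) => psi_x1; rewrite psi_x1 // => _.
- by exists (vadd x1 x1); rewrite // psiDl psi_x1; apply/val_inj.
- by exists x1.
- by exists (vadd x1 x1); rewrite // psiDl psi_x1; apply/val_inj.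
Qed.

Definition lee_enum (S : comNzRingType) n (C : {set vec n}) (P Q : S) : S :=
  \sum_(c in C) wmono P Q (4 * n) (leeW c).

Lemma LeeEnumE n (C : {set vec n}) P Q : LeeEnum C P Q = lee_enum C P Q.
Proof. by []. Qed.

Section MacWilliams.
Variables (S : idomainType) (j : S) (n : nat).
Hypotheses (j2 : j ^+ 2 = -1) (two_neq0 : 2%:R != 0 :> S).

Lemma sum_chi_psi (C : {set vec n}) y : is_linear_code C ->
  \sum_(x in C) chi j (psi x y) = if y \in dual C then #|C|%:R else 0.
Proof.
move=> linC; case: ifPn => [yD | /(exists_psi2 linC) [x0 x0C psi_x0]].
  rewrite (eq_bigr (fun _ => 1)) ?sumr_const // => x xC.
  by rewrite (in_dualP _ linC yD x xC).
set T := \sum_(x in C) _.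
(* Translating by x0 permutes C and multiplies every term by chi 2 = -1. *)
have T_opp : T = - T.
  rewrite -[RHS]mulrN1 -(chi2 j2) {1}/T (reindex_inj (@vadd_inj _ x0)).
  rewrite big_distrl /=; apply: eq_big => [x|x _]; first by rewrite vadd_code.
  by rewrite psiDl psi_x0 chiD.
apply/eqP; move/eqP: T_opp; rewrite -subr_eq0 opprK -mulr2n -mulr_natl.
by rewrite mulf_eq0 (negPf two_neq0).
Qed.

Lemma sum_chi_psi_wmono (x : vec n) (P Q : S) :
  \sum_(y : vec n) chi j (psi x y) * wmono P Q (4 * n) (leeW y)
  = \prod_(i < n) \sum_(w : R4) chi j (pi4 (R4mul (x i) w)) * wmono P Q 4 (leeR4 w).
Proof.
rewrite bigA_distr_bigA /=; apply: eq_bigr => y _.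
rewrite psi_sum (big_morph (chi j) (chiD j2) (chi0 j)) -[in (4 * n)%N](card_ord n).
by rewrite /leeW -wmono_prod ?big_split // => i; apply: leeR4_le4.
Qed.

Theorem macwilliams_lee (C : {set vec n}) (P Q : S) : is_linear_code C ->
  #|C|%:R * lee_enum (dual C) P Q = lee_enum C (P + Q) (P - Q).
Proof.
move=> linC; symmetry.
transitivity (\sum_(x in C) \sum_(y : vec n)
                chi j (psi x y) * wmono P Q (4 * n) (leeW y)).
  apply: eq_bigr => x _; rewrite sum_chi_psi_wmono /leeW -[in (4 * n)%N](card_ord n).
  rewrite -wmono_prod => [|i]; last exact: leeR4_le4.
  by apply: eq_bigr => i _; rewrite lee_transform_R4.
rewrite exchange_big /= mulr_sumr [in RHS]big_mkcond /=; apply: eq_bigr => y _.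
by rewrite -mulr_suml sum_chi_psi //; case: ifP; rewrite ?mul0r ?mulr0.
Qed.

End MacWilliams.

Lemma rmorph_lee_enum (S T : comNzRingType) (f : {rmorphism S -> T}) n
    (C : {set vec n}) (P Q : S) :
  f (lee_enum C P Q) = lee_enum C (f P) (f Q).
Proof.
by rewrite rmorph_sum; apply: eq_bigr => c _; rewrite rmorphM !rmorphXn.
Qed.

Lemma map_mpoly_inj k (R T : nzRingType) (f : {rmorphism R -> T}) :
  injective f -> injective (map_mpoly (n := k) f).
Proof.
move=> inj_f p q eq_pq; apply/mpolyP => m.
by apply: inj_f; rewrite -!mcoeff_map_mpoly eq_pq.
Qed.

Theorem theorem3p10 (n : nat) (C : {set vec n}) :
  is_linear_code C ->
  LeeEnum (dual C) varW varX =
  (#|C|%:R)^-1 *: LeeEnum C (varW + varX) (varW - varX).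
Proof.
move=> linC; pose j : {mpoly algC[2]} := 'i%:MP.
have j2 : j ^+ 2 = -1 by rewrite -rmorphXn sqrCi rmorphN1.
have two_neq0 : 2%:R != 0 :> {mpoly algC[2]}.
  by rewrite -mpolyC_nat mpolyC_eq0 pnatr_eq0.
have C_neq0 : #|C|%:R != 0 :> algC.
  by rewrite pnatr_eq0 -lt0n; apply/card_gt0P; exists (vzero n); case: linC.
rewrite !LeeEnumE; apply: (map_mpoly_inj (f := ratr) (@fmorph_inj _ _ _)).
rewrite map_mpolyZ [LHS](rmorph_lee_enum (map_mpoly ratr)).
rewrite [X in _ *: X](rmorph_lee_enum (map_mpoly ratr)) rmorphD rmorphB.
rewrite fmorphV rmorph_nat; transitivity ((#|C|%:R : algC)^-1 *:
  (#|C|%:R * lee_enum (dual C) (map_mpoly ratr varW) (map_mpoly ratr varX))).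
  by rewrite mulr_natl -scaler_nat scalerA mulVf // scale1r.
by congr (_ *: _); exact: (macwilliams_lee j2 two_neq0).
Qed.
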